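(* Let $\mathbb{C}[X]^*$ be the linear dual of $\mathbb{C}[X]$ with the convolution product $(f*g)(X^n)=\sum_{k=0}^n\binom{n}{k}f(X^k)g(X^{n-k})$ (unit $\varepsilon$, $\varepsilon(X^n)=\delta_{n,0}$), let $I=\{f\in\mathbb{C}[X]^*\mid f(1)=0\}$, let $\mathbb{C}[X]^{\circ}$ be the subalgebra of those $f\in\mathbb{C}[X]^*$ vanishing on some non-zero ideal of $\mathbb{C}[X]$, and let $J=I\cap\mathbb{C}[X]^{\circ}$. Let $\xi\in\mathbb{C}[X]^*$ be given by $\xi(X^n)=\delta_{n,1}$ and $\phi_1\in\mathbb{C}[X]^*$ by $\phi_1(X^n)=1$ for all $n\geq 0$ (powers $\xi^k$ taken in the convolution product, $\xi^0=\varepsilon$). Then for every $n\geq 1$ the element $$\phi_1-\sum_{k=0}^{n-1}\frac{1}{k!}\xi^k$$ belongs to $I^n\cap\mathbb{C}[X]^{\circ}$ (with $I^n$ computed in $\mathbb{C}[X]^*$) but does not belong to $J^n$ (computed in $\mathbb{C}[X]^\circ$) when $n\geq 2$. In particular $J^2\subsetneq I^2\cap\mathbb{C}[X]^\circ$, and the $J$-adic filtration $(J^n)_n$ on $\mathbb{C}[X]^\circ$ does not coincide with the induced filtration $(I^n\cap\mathbb{C}[X]^\circ)_n$.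
   Context: Via $f\mapsto (f(X^n))_{n\geq0}$, $\mathbb{C}[X]^*$ is identified with the space of complex sequences under the Hurwitz product and $\mathbb{C}[X]^\circ$ with the linearly recursive sequences. Here $\phi_1$ is the algebra map $\mathbb{C}[X]\to\mathbb{C}$ with $X\mapsto 1$. *)

From HB Require Import structures.
From mathcomp Require Import all_boot all_order all_algebra.
From mathcomp Require Import complex.
From mathcomp Require Import reals.
Set Implicit Arguments. Unset Strict Implicit. Unset Printing Implicit Defensive.
Import Order.TTheory GRing.Theory Num.Theory.
Local Open Scope ring_scope.

Section Hurwitz.
Variable C : fieldType.

(* C[X]^* identified with sequences f : nat -> C, f n = f(X^n). *)
Definition hseq := nat -> C.

Definition hadd (f g : hseq) : hseq := fun n => f n + g n.
Definition hzero : hseq := fun _ => 0.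
Definition hopp (f : hseq) : hseq := fun n => - f n.
Definition hscale (c : C) (f : hseq) : hseq := fun n => c * f n.

Definition hconv (f g : hseq) : hseq :=
  fun n => \sum_(k < n.+1) 'C(n, k)%:R * f k * g (n - k)%N.

Definition heps : hseq := fun n => (n == 0%N)%:R.

Definition hxi : hseq := fun n => (n == 1%N)%:R.
Definition phi1 : hseq := fun _ => 1.

Definition hpow (f : hseq) (k : nat) : hseq := iter k (hconv f) heps.

Definition heval (f : hseq) (p : {poly C}) : C :=
  \sum_(i < size p) p`_i * f i.

Definition Iaug (f : hseq) : Prop := f 0%N = 0.

Definition is_poly_ideal (S : {poly C} -> Prop) : Prop :=
  [/\ S 0, (forall p q, S p -> S q -> S (p + q)) &
      (forall p q, S p -> S (q * p))].

Definition Cdualo (f : hseq) : Prop :=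
  exists S : {poly C} -> Prop,
    [/\ is_poly_ideal S, (exists p, S p /\ p != 0) &
        (forall p, S p -> heval f p = 0)].

Definition Jaug (f : hseq) : Prop := Iaug f /\ Cdualo f.

Definition idpow (Amb A : hseq -> Prop) (n : nat) (f : hseq) : Prop :=
  exists (m : nat) (r : 'I_m -> hseq) (a : 'I_m -> 'I_n -> hseq),
    [/\ (forall i, Amb (r i)), (forall i j, A (a i j)) &
        f = \big[hadd/hzero]_(i < m) hconv (r i) (\big[hconv/heps]_(j < n) a i j)].

Definition allseq (f : hseq) : Prop := True.

Definition tail_elt (n : nat) : hseq :=
  hadd phi1 (hopp (\big[hadd/hzero]_(k < n) hscale (k`!%:R)^-1 (hpow hxi k))).

End Hurwitz.

(* Every element of C[X]° is an exponential polynomial, a finite sum of blocks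
   phi_l * P(xi) with phi_l the sequence (l^n)_n and P a polynomial: peel a
   linear factor X - l off a non-zero annihilating polynomial, the difference
   operator f |-> (f(n+1) - l f(n))_n being onto the exponential polynomials with
   kernel C phi_l.  Blocks at distinct roots are linearly independent, so the
   augmentation phi_l |-> 1 is a well-defined algebra map from C[X]° onto C[xi];
   it sends J into xi C[xi], hence J^n into xi^n C[xi].  The element
   phi_1 - sum_(k < n) xi^k / k! is sent to 1 - sum_(k < n) xi^k / k!, whose
   xi-coefficient is -1 when n >= 2, so it is not in J^n.  It is however the
   sequence (n <= x)_x = (x! / (x + n)!)_x * xi^n, which lies in I^n. *)

From mathcomp Require Import all_boot all_order all_algebra.
From mathcomp Require Import complex reals.
From mathcomp Require Import ring.
From Stdlib Require Import FunctionalExtensionality.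
Import GRing.Theory Num.Theory.
Local Open Scope ring_scope.

Lemma dvdp_Xl (C : fieldType) (p : {poly C}) : ('X %| p) = (p`_0 == 0).
Proof. by rewrite -['X]subr0 -polyC0 dvdp_XsubCl rootE horner_coef0. Qed.

Lemma dvdp_Xn_prod (C : fieldType) n (p : 'I_n -> {poly C}) :
  (forall j, 'X %| p j) -> 'X^n %| \prod_(j < n) p j.
Proof.
elim: n p => [|n IH] p Xp; first by rewrite big_ord0 expr0 dvdpp.
by rewrite big_ord_recl exprS dvdp_mul // IH.
Qed.

Section ExponentialPolynomials.
Context {C : fieldType}.
Hypothesis C_char0 : has_pchar0 C.
Implicit Types (f h : hseq C) (l d c : C) (P Q p q : {poly C}).
Implicit Types (s t : seq (C * {poly C})).

Lemma natf_neq0 n : (0 < n)%N -> n%:R != 0 :> C.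
Proof. by rewrite (pcharf0P _).1 // -lt0n. Qed.

Lemma fact_neq0 n : n`!%:R != 0 :> C.
Proof. exact/natf_neq0/fact_gt0. Qed.

Definition hshift f : hseq C := fun n => f n.+1.

Lemma hconv0 f h : hconv f h 0 = f 0%N * h 0%N.
Proof. by rewrite /hconv big_ord1 bin0 mul1r. Qed.

Lemma hconvS f h n : hconv f h n.+1 = hconv (hshift f) h n + hconv f (hshift h) n.
Proof.
rewrite /hconv /hshift big_ord_recl /=.
under eq_bigr => i _ do rewrite /bump /= add1n binS natrD !mulrDl subSS.
rewrite big_split /= [X in _ + X]addrC addrCA; congr (_ + _).
rewrite bin0 [in RHS]big_ord_recl /= bin0; congr (_ + _); first by rewrite !subn0.
rewrite big_ord_recr /= bin_small // !mul0r addr0.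
by apply: eq_bigr => i _; rewrite /bump /= add1n subnSK.
Qed.

Lemma hconv_suml I (r : seq I) (F : I -> hseq C) h n :
  hconv (fun m => \sum_(x <- r) F x m) h n = \sum_(x <- r) hconv (F x) h n.
Proof.
by rewrite /hconv exchange_big; apply: eq_bigr => k _; rewrite mulr_sumr mulr_suml.
Qed.

Lemma hconv_sumr I (r : seq I) (F : I -> hseq C) f n :
  hconv f (fun m => \sum_(x <- r) F x m) n = \sum_(x <- r) hconv f (F x) n.
Proof. by rewrite /hconv exchange_big; apply: eq_bigr => k _; rewrite mulr_sumr. Qed.

Lemma hsumE I (r : seq I) (P : pred I) (F : I -> hseq C) n :
  (\big[@hadd C/@hzero C]_(i <- r | P i) F i) n = \sum_(i <- r | P i) F i n.
Proof. exact: (big_morph (fun f : hseq C => f n) (id1 := 0) (op1 := +%R)). Qed.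

Lemma hpowE f k : hpow f k = \big[@hconv C/@heps C]_(j < k) f.
Proof. by elim: k => [|k IH]; rewrite ?big_ord0 // big_ord_recl -IH. Qed.

(** * Exponential polynomials *)

Definition tderiv d P := d *: P + P^`().

(* [hblock l P] is [phi_l * P(xi)], i.e. [n |-> \sum_k k! P_k 'C(n, k) l^(n - k)];
   shifting it replaces [P] by [l P + P'], which is taken as the definition. *)
Definition hblock l P : hseq C := fun n => (iter n (tderiv l) P)`_0.

Lemma tderivD d P Q : tderiv d (P + Q) = tderiv d P + tderiv d Q.
Proof. by rewrite /tderiv scalerDr derivD addrACA. Qed.

Lemma tderivZ d c P : tderiv d (c *: P) = c *: tderiv d P.
Proof. by rewrite /tderiv derivZ scalerDr !scalerA mulrC. Qed.

Lemma tderivM a b P Q : tderiv (a + b) (P * Q) = tderiv a P * Q + P * tderiv b Q.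
Proof. by rewrite /tderiv derivM -!mul_polyC polyCD; ring. Qed.

Lemma tderiv0 P : tderiv 0 P = P^`().
Proof. by rewrite /tderiv scale0r add0r. Qed.

Lemma iter_tderiv0 m P : iter m (tderiv 0) P = P^`(m).
Proof. exact: (eq_iter tderiv0). Qed.

Lemma hblockS l P n : hblock l P n.+1 = hblock l (tderiv l P) n.
Proof. by rewrite /hblock iterSr. Qed.

Lemma hblock_shift l P : hshift (hblock l P) = hblock l (tderiv l P).
Proof. by apply: functional_extensionality => n; apply: hblockS. Qed.

Lemma hblockD l P Q n : hblock l (P + Q) n = hblock l P n + hblock l Q n.
Proof.
by elim: n P Q => [|n IH] P Q; [exact: coefD | rewrite !hblockS tderivD IH].
Qed.

Lemma hblockZ l c P n : hblock l (c *: P) n = c * hblock l P n.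
Proof. by elim: n P => [|n IH] P; [exact: coefZ | rewrite !hblockS tderivZ IH]. Qed.

Lemma hblock_poly0 l n : hblock l 0 n = 0.
Proof. by have := hblockZ l 0 0 n; rewrite scale0r mul0r. Qed.

Lemma hblockN l P n : hblock l (- P) n = - hblock l P n.
Proof. by rewrite -scaleN1r hblockZ mulN1r. Qed.

Lemma hblock_sum l I (r : seq I) (p : pred I) (F : I -> {poly C}) n :
  hblock l (\sum_(i <- r | p i) F i) n = \sum_(i <- r | p i) hblock l (F i) n.
Proof.
exact: (big_morph (fun P => hblock l P n) (fun P Q => hblockD l P Q n) (hblock_poly0 l n)).
Qed.

Lemma hblockC l c n : hblock l c%:P n = c * l ^+ n.
Proof.
elim: n c => [|n IH] c; first by rewrite /hblock coefC mulr1.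
by rewrite hblockS /tderiv derivC addr0 -mul_polyC -polyCM IH exprS mulrA [c * l]mulrC.
Qed.

Lemma hblock0E P n : hblock 0 P n = n`!%:R * P`_n.
Proof. by rewrite /hblock iter_tderiv0 coef_derivn addn0 ffactnn mulr_natl. Qed.

Lemma hconv_hblock a b P Q n :
  hconv (hblock a P) (hblock b Q) n = hblock (a + b) (P * Q) n.
Proof.
elim: n P Q => [|n IH] P Q; first by rewrite hconv0 /hblock /= coef0M.
by rewrite hconvS !hblock_shift !IH -hblockD hblockS tderivM.
Qed.

Lemma heps_hblock : heps C = hblock 0 1.
Proof.
by apply: functional_extensionality => -[|n]; rewrite hblock0E coef1 ?mulr1 ?mulr0.
Qed.

Lemma hxi_hblock : hxi C = hblock 0 'X.
Proof.
by apply: functional_extensionality => -[|[|n]]; rewrite hblock0E coefX ?mulr1 ?mulr0.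
Qed.

Lemma hprod_hxi k : \big[@hconv C/@heps C]_(j < k) hxi C = hblock 0 'X^k.
Proof.
elim: k => [|k IH]; first by rewrite big_ord0 heps_hblock expr0.
rewrite big_ord_recl IH hxi_hblock exprS.
by apply: functional_extensionality => n; rewrite hconv_hblock add0r.
Qed.

Lemma hconv_hblockXn f k x : hconv f (hblock 0 'X^k) x = (x ^_ k)%:R * f (x - k)%N.
Proof.
rewrite /hconv; under eq_bigr => i _ do rewrite hblock0E coefXn.
case: (leqP k x) => kx; last first.
  rewrite ffact_small // mul0r big1 // => i _.
  by rewrite (ltn_eqF (leq_ltn_trans (leq_subr _ _) kx)) !mulr0.
have xk : (x - k < x.+1)%N by rewrite ltnS leq_subr.
rewrite (bigD1 (Ordinal xk)) //= subKn // eqxx mulr1 big1 ?addr0 => [|i].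
  by rewrite bin_sub // -bin_ffact natrM mulrAC.
rewrite -val_eqE /= => ik; rewrite (_ : (x - i == k)%N = false) ?mulr0 //.
by apply: contraNF ik => /eqP <-; rewrite subKn // -ltnS.
Qed.

(* Convolving with [hblock (- l) 1] moves the root to [0], where the
   coefficients of [P] can be read off. *)
Lemma hblock_eq0 l P : hblock l P = @hzero C -> P = 0.
Proof.
move=> hP; apply/polyP => k; rewrite coef0.
have := hconv_hblock l (- l) P 1 k.
rewrite hP subrr mulr1 hblock0E /hconv big1 => [/esym/eqP|i _].
  by rewrite mulf_eq0 (negbTE (fact_neq0 k)) => /eqP.
by rewrite /hzero mulr0 mul0r.
Qed.

Definition hexp s : hseq C := fun n => \sum_(x <- s) hblock x.1 x.2 n.

(* The image of [hexp s] under the augmentation [phi_l |-> 1] onto [C[xi]];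
   it is well defined by [aug_eq]. *)
Definition aug s : {poly C} := \sum_(x <- s) x.2.

Definition expmul s t : seq (C * {poly C}) :=
  [seq (x.1 + y.1, x.2 * y.2) | x <- s, y <- t].

Lemma hexp_nil : hexp [::] = @hzero C.
Proof. by apply: functional_extensionality => n; rewrite /hexp big_nil. Qed.

Lemma hexp_cons x s n : hexp (x :: s) n = hblock x.1 x.2 n + hexp s n.
Proof. by rewrite /hexp big_cons. Qed.

Lemma hexp_cat s t : hexp (s ++ t) = hadd (hexp s) (hexp t).
Proof. by apply: functional_extensionality => n; rewrite /hexp big_cat. Qed.

Lemma hexp_unit : hexp [:: (0, 1)] = heps C.
Proof.
by rewrite heps_hblock; apply: functional_extensionality => n; rewrite /hexp big_seq1.
Qed.

Lemma hexp_expmul s t : hexp (expmul s t) = hconv (hexp s) (hexp t).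
Proof.
apply: functional_extensionality => n.
rewrite /hexp big_allpairs_dep hconv_suml; apply: eq_bigr => x _.
by rewrite hconv_sumr; apply: eq_bigr => y _; rewrite hconv_hblock.
Qed.

Lemma hexp_at0 s : hexp s 0 = (aug s)`_0.
Proof. by rewrite /hexp /aug coef_sum. Qed.

Lemma aug_cat s t : aug (s ++ t) = aug s + aug t.
Proof. exact: big_cat. Qed.

Lemma aug_unit : aug [:: (0, 1)] = 1.
Proof. exact: big_seq1. Qed.

Lemma aug_expmul s t : aug (expmul s t) = aug s * aug t.
Proof.
by rewrite /aug big_allpairs_dep mulr_suml; apply: eq_bigr => x _; rewrite mulr_sumr.
Qed.

Definition hdiff l f : hseq C := fun n => f n.+1 - l * f n.

Lemma hdiff0 l : hdiff l (@hzero C) = @hzero C.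
Proof. by apply: functional_extensionality => n; rewrite /hdiff /hzero mulr0 subr0. Qed.

Lemma iter_hdiff0 m l : iter m (hdiff l) (@hzero C) = @hzero C.
Proof. by elim: m => //= m ->; apply: hdiff0. Qed.

Lemma hdiff_hblock l1 l P : hdiff l1 (hblock l P) = hblock l (tderiv (l - l1) P).
Proof.
apply: functional_extensionality => n.
rewrite /hdiff hblockS -mulNr -hblockZ -hblockD; congr (hblock _ _ n).
by rewrite /tderiv scalerBl scaleNr addrAC.
Qed.

Lemma hdiff_hexp l s :
  hdiff l (hexp s) = hexp [seq (x.1, tderiv (x.1 - l) x.2) | x <- s].
Proof.
apply: functional_extensionality => n.
rewrite /hexp big_map /hdiff mulr_sumr -sumrB; apply: eq_bigr => x _.
by rewrite -hdiff_hblock.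
Qed.

Lemma iter_hdiff_hexp m l s :
  iter m (hdiff l) (hexp s) = hexp [seq (x.1, iter m (tderiv (x.1 - l)) x.2) | x <- s].
Proof.
elim: m => [|m IH]; first by rewrite map_id_in // => -[].
by rewrite iterS IH hdiff_hexp -map_comp.
Qed.

Lemma hdiff_eq0 l f : hdiff l f = @hzero C -> f = hblock l (f 0%N)%:P.
Proof.
move=> hf; apply: functional_extensionality => n; rewrite hblockC.
elim: n => [|n IH]; first by rewrite mulr1.
have /eqP := congr1 (fun g => g n) hf; rewrite /hdiff /hzero subr_eq0 => /eqP ->.
by rewrite IH exprS mulrCA.
Qed.

Lemma deriv_surj Q : exists P, P^`() = Q.
Proof.
exists (\poly_(i < (size Q).+1) (Q`_i.-1 / i%:R)).
apply/polyP => i; rewrite coef_deriv coef_poly ltnS /=.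
case: ltnP => [_|/(nth_default 0) ->]; last by rewrite mul0rn.
by rewrite -[RHS](mulfVK (natf_neq0 _ (ltn0Sn i))) mulr_natr.
Qed.

Lemma tderiv_surj d Q : exists P, tderiv d P = Q.
Proof.
have [->|d0] := eqVneq d 0.
  by have [P PQ] := deriv_surj Q; exists P; rewrite tderiv0.
have [n] := ubnP (size Q); elim: n Q => // n IH Q szQ.
have [->|Q0] := eqVneq Q 0; first by exists 0; rewrite /tderiv scaler0 deriv0 addr0.
have [P1 hP1] := IH Q^`() (leq_trans (lt_size_deriv Q0) szQ).
exists (d^-1 *: (Q - P1)).
rewrite /tderiv scalerA mulfV // scale1r derivZ derivB -hP1 /tderiv addrK.
by rewrite scalerA mulVf // scale1r subrK.
Qed.

Lemma hdiff_hexp_surj l t : exists s, hdiff l (hexp s) = hexp t.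
Proof.
elim: t => [|x t [s hs]]; first by exists [::]; rewrite hexp_nil hdiff0.
have [P hP] := tderiv_surj (x.1 - l) x.2.
exists ((x.1, P) :: s); apply: functional_extensionality => n.
by move: hs; rewrite !hdiff_hexp => hs; rewrite !hexp_cons /= hP hs.
Qed.

(** * Linear independence of the blocks *)

Lemma tderiv_eq0 {d} : d != 0 -> forall P, tderiv d P = 0 -> P = 0.
Proof.
move=> d0 P /eqP; rewrite /tderiv addr_eq0 => /eqP eP.
apply/eqP; apply: contraT => P0; have := lt_size_deriv P0.
by rewrite -size_polyN -eP size_scale // ltnn.
Qed.

Lemma iter_tderiv_eq0 m d P : d != 0 -> iter m (tderiv d) P = 0 -> P = 0.
Proof. by move=> d0; elim: m P => //= m IH P /(tderiv_eq0 d0)/IH. Qed.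

Lemma iter_tderiv_sum m d I (r : seq I) (p : pred I) (F : I -> {poly C}) :
  iter m (tderiv d) (\sum_(i <- r | p i) F i) =
  \sum_(i <- r | p i) iter m (tderiv d) (F i).
Proof.
apply: big_morph => [P Q|]; first by elim: m => //= m ->; rewrite tderivD.
by elim: m => //= m ->; rewrite /tderiv deriv0 scaler0 addr0.
Qed.

Definition root_part l s : {poly C} := \sum_(x <- s | x.1 == l) x.2.

Lemma hexp_split l s n :
  hexp s n = hblock l (root_part l s) n + hexp [seq x <- s | x.1 != l] n.
Proof.
rewrite /hexp /root_part (bigID (fun x => x.1 == l)) /= hblock_sum big_filter.
by congr (_ + _); apply: eq_bigr => x /eqP ->.
Qed.

(* The blocks of [iter m (hdiff l) (hexp s)], for [m] the largest size in [s],
   except those at [l], which vanish. *)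
Definition drop_root l s :=
  [seq (x.1, iter (\max_(y <- s) size y.2) (tderiv (x.1 - l)) x.2) | x <- s & x.1 != l].

Lemma hexp_drop_root l s :
  hexp (drop_root l s) = iter (\max_(y <- s) size y.2) (hdiff l) (hexp s).
Proof.
apply: functional_extensionality => n.
rewrite iter_hdiff_hexp [RHS](hexp_split l) filter_map.
set s' := map _ s; have -> : root_part l s' = 0.
  rewrite /root_part big_map big1_seq // => x /andP [/eqP /= -> xs].
  rewrite subrr iter_tderiv0 derivn_poly0 //.
  exact: (leq_bigmax_seq (F := fun y : C * {poly C} => size y.2) _ xs isT).
by rewrite hblock_poly0 add0r.
Qed.

Lemma root_part_drop_root l0 l s : l0 != l ->
  root_part l0 (drop_root l s) =
  iter (\max_(y <- s) size y.2) (tderiv (l0 - l)) (root_part l0 s).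
Proof.
move=> l0l; rewrite /root_part /drop_root big_map big_filter_cond iter_tderiv_sum.
by apply: eq_big => [x | x /andP [_ /eqP /= <-] //] /=; apply/andb_idl => /eqP ->.
Qed.

(* The roots other than [l] are removed one at a time by [drop_root], which acts
   injectively on the part at [l]. *)
Lemma hexp_eq0_root_part s l : hexp s = @hzero C -> root_part l s = 0.
Proof.
suff key ls : l \notin ls -> forall s, {subset [seq x.1 | x <- s] <= l :: ls} ->
    hexp s = @hzero C -> root_part l s = 0.
  apply: (key [seq l' <- [seq x.1 | x <- s] | l' != l]); first by rewrite mem_filter eqxx.
  by move=> l' ls'; rewrite inE mem_filter ls' andbT; case: eqP.
elim: ls => [_|l1 ls IH lnot] {}s sub hs.
  have no_other_root : [seq x <- s | x.1 != l] = [::].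
    rewrite -(filter_pred0 s); apply: eq_in_filter => x xs.
    by have := sub _ (map_f fst xs); rewrite inE => /eqP ->; rewrite eqxx.
  apply: (@hblock_eq0 l); apply: functional_extensionality => n.
  by have := hexp_split l s n; rewrite hs no_other_root hexp_nil /hzero addr0 => <-.
have /norP [ll1 lls] : ~~ ((l == l1) || (l \in ls)) by rewrite -in_cons.
apply: (@iter_tderiv_eq0 (\max_(y <- s) size y.2) (l - l1)); first by rewrite subr_eq0.
rewrite -root_part_drop_root //; apply: IH => //; last first.
  by rewrite hexp_drop_root hs iter_hdiff0.
rewrite /drop_root -map_comp => y /mapP [x]; rewrite mem_filter => /andP [xl1 xs] ->.
by have := sub _ (map_f fst xs); rewrite !inE (negbTE xl1).
Qed.

Lemma aug_eq0 s : (forall l, root_part l s = 0) -> aug s = 0.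
Proof.
have [n] := ubnP (size s); elim: n s => // n IH [|x s] sz hs; first exact: big_nil.
rewrite /aug (bigID (fun y => y.1 == x.1)) /=.
have := hs x.1; rewrite /root_part => ->; rewrite add0r -big_filter.
apply: IH => [|l]; first by rewrite /= eqxx size_filter (leq_ltn_trans (count_size _ _)).
rewrite /root_part big_filter_cond; have [->|lx] := eqVneq l x.1.
  by rewrite big_pred0 // => y; case: eqP.
by rewrite -[RHS](hs l); apply: eq_bigl => y; apply/andb_idl => /eqP ->.
Qed.

Lemma aug_eq s t : hexp s = hexp t -> aug s = aug t.
Proof.
move=> st; have h : hexp (s ++ [seq (x.1, - x.2) | x <- t]) = @hzero C.
  rewrite hexp_cat st; apply: functional_extensionality => n.
  rewrite /hadd /hexp /hzero big_map /=; under [X in _ + X]eq_bigr do rewrite hblockN.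
  by rewrite sumrN subrr.
have augN : aug [seq (x.1, - x.2) | x <- t] = - aug t by rewrite /aug big_map sumrN.
apply/eqP; rewrite -subr_eq0 -augN -aug_cat; apply/eqP/aug_eq0 => l.
exact: hexp_eq0_root_part.
Qed.

Lemma hevalE f p N : (size p <= N)%N -> heval f p = \sum_(i < N) p`_i * f i.
Proof.
move=> hN; rewrite /heval (big_ord_widen N (fun i => p`_i * f i) hN) big_mkcond /=.
by apply: eq_bigr => i _; case: ltnP => // /(nth_default 0) ->; rewrite mul0r.
Qed.

Lemma heval_Xn f m : heval f 'X^m = f m.
Proof.
rewrite /heval size_polyXn big_ord_recr /= coefXn eqxx mul1r big1 ?add0r // => i _.
by rewrite coefXn (ltn_eqF (ltn_ord i)) mul0r.
Qed.

Lemma heval_sum I (r : seq I) (F : I -> hseq C) p :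
  heval (fun n => \sum_(x <- r) F x n) p = \sum_(x <- r) heval (F x) p.
Proof. by rewrite /heval exchange_big; apply: eq_bigr => i _; rewrite mulr_sumr. Qed.

Lemma heval_mulXsubC f q l : heval f (q * ('X - l%:P)) = heval (hdiff l f) q.
Proof.
have sz : (size (q * ('X - l%:P))%R <= (size q).+1)%N.
  by rewrite (leq_trans (size_polyMleq _ _)) // size_XsubC addn2.
rewrite (hevalE f _ _ sz).
under eq_bigr => i _ do rewrite mulrBr coefB coefMX coefMC mulrBl.
rewrite sumrB big_ord_recl big_ord_recr /= nth_default // !mul0r add0r addr0.
by rewrite /heval -sumrB; apply: eq_bigr => i _; rewrite /hdiff /bump /= mulrBr mulrA.
Qed.

Lemma Cdualo_ann f : Cdualo f <-> exists2 P, P != 0 & forall q, heval f (q * P) = 0.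
Proof.
split=> [[S [[S0 SD SM] [P [SP P0]] fS]]|[P P0 fP]].
  by exists P => // q; apply/fS/SM.
exists (fun p => exists q, p = q * P); split.
- split; first by exists 0; rewrite mul0r.
  + by move=> _ _ [q1 ->] [q2 ->]; exists (q1 + q2); rewrite mulrDl.
  + by move=> _ p [q ->]; exists (p * q); rewrite mulrA.
- by exists P; split=> //; exists 1; rewrite mul1r.
- by move=> _ [q ->].
Qed.

Lemma hblock_ann l P m q :
  (size P <= m)%N -> heval (hblock l P) (q * ('X - l%:P) ^+ m) = 0.
Proof.
elim: m P q => [|m IH] P q sP.
  move: sP; rewrite leqn0 size_poly_eq0 => /eqP ->.
  by apply: big1 => i _; rewrite hblock_poly0 mulr0.
rewrite exprSr mulrA heval_mulXsubC hdiff_hblock subrr tderiv0 IH //.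
have [->|P0] := eqVneq P 0; first by rewrite deriv0 size_poly0.
by rewrite -ltnS (leq_trans (lt_size_deriv P0)).
Qed.

Lemma Cdualo_hexp s : Cdualo (hexp s).
Proof.
apply/Cdualo_ann; exists (\prod_(x <- s) ('X - x.1%:P) ^+ size x.2).
  by rewrite prodf_seq_neq0; apply/allP => x _; rewrite expf_neq0 // polyXsubC_eq0.
move=> q; rewrite /hexp heval_sum big1_seq // => x /andP [_ xs].
by rewrite (big_rem x xs) /= mulrA mulrAC hblock_ann.
Qed.

Definition tail_rep n : seq (C * {poly C}) :=
  [:: (1, 1); (0, - \sum_(k < n) (k`!%:R)^-1 *: 'X^k)].

Lemma tail_elt_hexp n : tail_elt C n = hexp (tail_rep n).
Proof.
apply: functional_extensionality => x.
rewrite /tail_elt /hadd /hopp /phi1 hsumE /hexp !big_cons big_nil addr0 /=.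
rewrite -polyC1 hblockC expr1n mulr1 hblockN hblock_sum; congr (1 - _).
by apply: eq_bigr => k _; rewrite hblockZ /hscale hpowE hprod_hxi.
Qed.

Lemma tail_elt_Cdualo n : Cdualo (tail_elt C n).
Proof. by rewrite tail_elt_hexp; apply: Cdualo_hexp. Qed.

Lemma aug_tail_rep_coef1 n : (1 < n)%N -> (aug (tail_rep n))`_1 = -1.
Proof.
move=> n1; rewrite /aug !big_cons big_nil addr0 coefD coef1 /= add0r coefN coef_sum.
rewrite (bigD1 (Ordinal n1)) //= coefZ coefXn eqxx mulr1 invr1 big1 ?addr0 // => k.
by rewrite coefZ coefXn -val_eqE /= eq_sym => /negbTE ->; rewrite mulr0.
Qed.

Lemma tail_eltE n x : tail_elt C n x = (n <= x)%N%:R.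
Proof.
rewrite tail_elt_hexp /hexp !big_cons big_nil addr0 /= -polyC1 hblockC expr1n mulr1.
rewrite hblock0E coefN coef_sum; under eq_bigr => k _ do rewrite coefZ coefXn.
case: ltnP => xn.
  rewrite (bigD1 (Ordinal xn)) //= eqxx mulr1 big1 => [|k]; last first.
    by rewrite -val_eqE /= eq_sym => /negbTE ->; rewrite mulr0.
  by rewrite addr0 mulrN mulfV ?fact_neq0 // subrr.
rewrite big1 ?oppr0 ?mulr0 ?addr0 // => k _.
by rewrite (gtn_eqF (leq_trans (ltn_ord k) xn)) mulr0.
Qed.

Lemma tail_elt_Ipow n : idpow (@allseq C) (@Iaug C) n (tail_elt C n).
Proof.
exists 1%N, (fun _ x => x`!%:R / (x + n)`!%:R), (fun _ _ => hxi C); split => //.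
apply: functional_extensionality => x.
rewrite hsumE big_ord1 hprod_hxi hconv_hblockXn tail_eltE.
case: (leqP n x) => nx; last by rewrite ffact_small // mul0r.
by rewrite subnK // mulrA -natrM ffact_fact // mulfV // fact_neq0.
Qed.

End ExponentialPolynomials.

Lemma Jpow_Ipow (C : fieldType) n f :
  idpow (@Cdualo C) (@Jaug C) n f -> idpow (@allseq C) (@Iaug C) n f.
Proof. by case=> m [r [a [_ Ja ->]]]; exists m, r, a; split=> // i j; case: (Ja i j). Qed.

Section ClosedField.
Context {C : closedFieldType}.
Hypothesis C_char0 : has_pchar0 C.
Implicit Types (f : hseq C) (s : seq (C * {poly C})).

Lemma CdualoP f : Cdualo f <-> exists s, f = hexp s.
Proof.
split=> [|[s ->]]; last exact: Cdualo_hexp.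
case/Cdualo_ann => P; have [N] := ubnP (size P).
elim: N P f => // N IH P f szP P0 annP.
case: (boolP (size P == 1%N)) => [/size_poly1P [c c0 Pc]|P1].
  exists [::]; rewrite hexp_nil; apply: functional_extensionality => m.
  have := annP (c^-1 *: 'X^m); rewrite Pc -scalerAl mulrC mul_polyC scalerA mulVf //.
  by rewrite scale1r heval_Xn.
have /closed_rootP [l /factor_theorem [Q PQ]] := P1.
have Q0 : Q != 0 by apply: contra_neq P0; rewrite PQ => ->; rewrite mul0r.
have [s1 hs1] : exists s1, hdiff l f = hexp s1.
  apply: (IH Q) => // [|q]; last by rewrite -heval_mulXsubC -mulrA -PQ annP.
  by move: szP; rewrite PQ size_mul ?polyXsubC_eq0 // size_XsubC addn2.
have [s2 hs2] := hdiff_hexp_surj C_char0 l s1.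
pose g n := f n - hexp s2 n.
have /hdiff_eq0 g_geom : hdiff l g = @hzero C.
  apply: functional_extensionality => n.
  transitivity (hdiff l f n - hdiff l (hexp s2) n); first by rewrite /hdiff /g; ring.
  by rewrite hs1 hs2 subrr.
exists ((l, (g 0%N)%:P) :: s2); apply: functional_extensionality => n.
by rewrite hexp_cons /= -g_geom /g subrK.
Qed.

Lemma Jaug_hexp f : Jaug f -> exists s, f = hexp s /\ 'X %| aug s.
Proof.
case=> f0 /CdualoP [s fE].
by exists s; split=> //; rewrite dvdp_Xl -hexp_at0 -fE; apply/eqP.
Qed.

Lemma Jpow_hexp n f : idpow (@Cdualo C) (@Jaug C) n f ->
  exists s, f = hexp s /\ 'X^n %| aug s.
Proof.
case=> m [r [a [Cr Ja ->]]].
have [sr hsr] := fin_all_exists (fun i => (CdualoP _).1 (Cr i)).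
have [sa hsa] := fin_all_exists (fun ij : 'I_m * 'I_n => Jaug_hexp _ (Ja ij.1 ij.2)).
exists (\big[cat/[::]]_(i < m) expmul (sr i) (\big[expmul/[:: (0, 1)]]_(j < n) sa (i, j))).
split.
  rewrite (big_morph _ hexp_cat hexp_nil); apply: eq_bigr => i _.
  rewrite hexp_expmul (big_morph _ hexp_expmul hexp_unit) -hsr.
  by congr (hconv _); apply: eq_bigr => j _; case: (hsa (i, j)).
rewrite (big_morph _ aug_cat (big_nil _ _ _ _)).
apply: (big_ind (fun p => 'X^n %| p)) => [|p q|i _]; [exact: dvdp0 | exact: dvdp_add |].
rewrite aug_expmul (big_morph _ aug_expmul aug_unit) dvdp_mull // dvdp_Xn_prod // => j.
by case: (hsa (i, j)).
Qed.

Lemma Jpow_Cdualo n f : idpow (@Cdualo C) (@Jaug C) n f -> Cdualo f.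
Proof. by case/Jpow_hexp => s [-> _]; apply: Cdualo_hexp. Qed.

Lemma tail_elt_notin_Jpow n :
  (1 < n)%N -> ~ idpow (@Cdualo C) (@Jaug C) n (tail_elt C n).
Proof.
move=> n1 /Jpow_hexp [s [tail_s /(dvdp_trans (dvdp_exp2l 'X n1))]].
rewrite (@aug_eq _ C_char0 s (tail_rep n)); last by rewrite -tail_s tail_elt_hexp.
case/dvdpP => q /(congr1 (fun p : {poly C} => p`_1)).
rewrite coefMXn /= aug_tail_rep_coef1 // => /eqP.
by rewrite oppr_eq0 oner_eq0.
Qed.

End ClosedField.

Theorem mainTheorem3 (R : realType) :
  (forall n : nat, (1 <= n)%N ->
     (idpow (@allseq R[i]) (@Iaug R[i]) n (@tail_elt R[i] n) /\ Cdualo (@tail_elt R[i] n))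
     /\ ((2 <= n)%N -> ~ idpow (@Cdualo R[i]) (@Jaug R[i]) n (@tail_elt R[i] n)))
  /\ (forall f : hseq R[i],
        idpow (@Cdualo R[i]) (@Jaug R[i]) 2 f -> idpow (@allseq R[i]) (@Iaug R[i]) 2 f /\ Cdualo f)
  /\ (exists f : hseq R[i],
        (idpow (@allseq R[i]) (@Iaug R[i]) 2 f /\ Cdualo f) /\ ~ idpow (@Cdualo R[i]) (@Jaug R[i]) 2 f).
Proof.
have C0 : has_pchar0 R[i] := pchar_num _.
have tail_in n : idpow (@allseq R[i]) (@Iaug R[i]) n (tail_elt R[i] n) /\
                 Cdualo (tail_elt R[i] n).
  by split; [exact: tail_elt_Ipow | exact: tail_elt_Cdualo].
split; first by move=> n _; split=> //; exact: tail_elt_notin_Jpow.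
split; first by move=> f Jf; split; [exact: Jpow_Ipow Jf | exact: Jpow_Cdualo C0 _ _ Jf].
by exists (tail_elt R[i] 2); split=> //; exact: tail_elt_notin_Jpow.
Qed.
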